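(* Let $\mathcal{S}$ be a finite thick generalized quadrangle of order $(s,t)$ with a group $G$ of automorphisms acting regularly on the points. Let $g\in G$ with $g^2\ne 1$, and let $P$ be a point with $P\sim P^g$. Let $\ell_1:=PP^{g^{-1}}$ and $\ell_2:=PP^g$. Then $\ell_1,\ell_2$ are all the lines of $\mathcal{L}_1(g)\cup\mathcal{L}_2(g)$ passing through $P$. Moreover: (1) if $P,P^g,P^{g^{-1}}$ are collinear, then $\ell_1=\ell_2$ and this line lies in $\mathcal{L}_1(g)$; (2) if $P,P^g,P^{g^{-1}}$ are not collinear, then $\ell_1,\ell_2$ are distinct and both lie in $\mathcal{L}_2(g)$.
   Context: A generalized quadrangle of order $(s,t)$: each line has $s+1$ points, each point is on $t+1$ lines, and for each non-incident point-line pair $(P,\ell)$ there is a unique point on $\ell$ collinear with $P$; thick means $\min\{s,t\}\ge2$. $P\sim Q$ means distinct collinear points; for lines, $\ell\sim m$ means distinct concurrent lines. $XY$ denotes the line through distinct collinear points $X,Y$. $\mathcal{L}_1(g)$ is the set of lines fixed by $g$, and $\mathcal{L}_2(g):=\{\ell:\ \ell^g\sim\ell\}$. *)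

From mathcomp Require Import all_boot all_fingroup.
Set Implicit Arguments. Unset Strict Implicit. Unset Printing Implicit Defensive.
Import GroupScope.

Section GQ.
Variables (Pt Ln : finType) (I : Pt -> Ln -> bool).

Definition collinear (P Q : Pt) : Prop :=
  P != Q /\ exists l, I P l && I Q l.

Definition collinear3 (P Q R : Pt) : Prop :=
  exists l, [&& I P l, I Q l & I R l].

Definition concurrent (l m : Ln) : Prop :=
  l != m /\ exists P, I P l && I P m.

Definition is_GQ (s t : nat) : Prop :=
  [/\ forall l : Ln, #|[set P | I P l]| = s.+1,
      forall P : Pt, #|[set l | I P l]| = t.+1,
      forall (P Q : Pt) (l m : Ln), P != Q -> I P l -> I Q l -> I P m -> I Q m -> l = m
    & forall (P : Pt) (l : Ln), ~~ I P l -> exists! Q : Pt, I Q l /\ collinear P Q].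

Definition is_thick_GQ (s t : nat) : Prop := is_GQ s t /\ 2 <= s /\ 2 <= t.
End GQ.

Section Aut.
Variables (gT : finGroupType) (Pt Ln : finType) (I : Pt -> Ln -> bool).
Variables (G : {group gT}) (toP : {action gT &-> Pt}) (toL : {action gT &-> Ln}).

Definition acts_by_automorphisms : Prop :=
  forall g, g \in G -> forall (P : Pt) (l : Ln), I (toP P g) (toL l g) = I P l.

Definition regular_on_points : Prop :=
  [transitive G, on [set: Pt] | toP] /\ forall P : Pt, 'C_G[P | toP] = 1.

Definition L1 (g : gT) (l : Ln) : Prop := toL l g = l.
Definition L2 (g : gT) (l : Ln) : Prop := concurrent I (toL l g) l.
End Aut.

(* If [l] passes through [P] and meets its image [l^g], then either [P] lies on
   [l^g], so that [P^(g^-1)] lies on [l], or the point where [l] meets [l^g] and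
   the point [P^g] are two points of [l^g] collinear with [P], hence equal by the
   quadrangle axiom, so that [P^g] lies on [l].  Thus [l] is [P P^(g^-1)] or
   [P P^g]; conversely [g] maps the first of these lines onto the second. *)
From mathcomp Require Import all_boot all_fingroup.
Set Implicit Arguments. Unset Strict Implicit. Unset Printing Implicit Defensive.
Import GroupScope.

Section Quadrangle.
Variables (Pt Ln : finType) (I : Pt -> Ln -> bool).
Hypothesis gq_axiom : forall (P : Pt) (l : Ln),
  ~~ I P l -> exists! Q : Pt, I Q l /\ collinear I P Q.

Lemma collinear_point_unique (P Q1 Q2 : Pt) (l : Ln) :
  ~~ I P l -> I Q1 l -> I Q2 l -> collinear I P Q1 -> collinear I P Q2 -> Q1 = Q2.
Proof.
move=> /gq_axiom [Q [_ Q_unique]] Q1l Q2l PQ1 PQ2.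
by rewrite -(Q_unique Q1) ?(Q_unique Q2).
Qed.

Section Collineation.
Variables (gT : finGroupType) (toP : {action gT &-> Pt}) (toL : {action gT &-> Ln}).
Variable g : gT.
Hypothesis incidence_act : forall (P : Pt) (l : Ln), I (toP P g) (toL l g) = I P l.

Lemma incidence_actV (P : Pt) (l : Ln) : I (toP P g^-1) l = I P (toL l g).
Proof. by rewrite -incidence_act actKV. Qed.

Lemma L2_of_common_point (Q : Pt) (l : Ln) :
  toL l g != l -> I Q (toL l g) -> I Q l -> L2 I toL g l.
Proof. by move=> moved Qlg Ql; split=> //; exists Q; rewrite Qlg Ql. Qed.

Lemma L1_or_L2_of_common_point (Q : Pt) (l : Ln) :
  I Q (toL l g) -> I Q l -> L1 toL g l \/ L2 I toL g l.
Proof.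
case: (eqVneq (toL l g) l) => [fixed | moved] Qlg Ql; first by left.
by right; apply: L2_of_common_point Qlg Ql.
Qed.

Lemma L1_or_L2_through_point (P : Pt) (l : Ln) :
  collinear I P (toP P g) -> I P l -> L1 toL g l \/ L2 I toL g l ->
  I (toP P g^-1) l \/ I (toP P g) l.
Proof.
move=> PPg Pl [fixed | [_ [Q /andP[Qlg Ql]]]].
  by right; rewrite -fixed incidence_act.
have [Plg | notPlg] := boolP (I P (toL l g)); first by left; rewrite incidence_actV.
right; suff -> : toP P g = Q by [].
apply: (collinear_point_unique notPlg) => //; first by rewrite incidence_act.
split; last by exists l; rewrite Pl Ql.
by apply: contraNneq notPlg => ->.
Qed.

End Collineation.
End Quadrangle.

Theorem lemma3p6 (gT : finGroupType) (Pt Ln : finType) (I : Pt -> Ln -> bool)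
  (s t : nat) (G : {group gT}) (toP : {action gT &-> Pt}) (toL : {action gT &-> Ln}) :
  is_thick_GQ I s t ->
  acts_by_automorphisms I G toP toL ->
  regular_on_points G toP ->
  forall (g : gT) (P : Pt), g \in G -> g ^+ 2 != 1 ->
  collinear I P (toP P g) ->
  forall l1 l2 : Ln,
    I P l1 -> I (toP P g^-1) l1 ->   (* l1 = P P^{g^-1} *)
    I P l2 -> I (toP P g) l2 ->      (* l2 = P P^g *)
    (forall l : Ln, I P l ->
       ((L1 toL g l \/ L2 I toL g l) <-> (l = l1 \/ l = l2))) /\
    (collinear3 I P (toP P g) (toP P g^-1) -> l1 = l2 /\ L1 toL g l1) /\
    (~ collinear3 I P (toP P g) (toP P g^-1) ->
       [/\ l1 != l2, L2 I toL g l1 & L2 I toL g l2]).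
Proof.
move=> [[_ _ line_unique gq_axiom] _] autG _ g P gG _ PPg l1 l2 Pl1 Pgil1 Pl2 Pgl2.
have inc_g := autG g gG.
have P_neq_Pgi : P != toP P g^-1.
  by case: PPg => P_neq_Pg _; apply: contra_neq P_neq_Pg => E; rewrite {2}E actKV.
have line_l1 l : I P l -> I (toP P g^-1) l -> l = l1.
  by move=> Pl Pgil; apply: (line_unique P (toP P g^-1)).
have line_l2 l : I P l -> I (toP P g) l -> l = l2.
  by move=> Pl Pgl; apply: (line_unique P (toP P g)) => //; exact: PPg.1.
have l1g : toL l1 g = l2.
  by apply: line_l2; [rewrite -(incidence_actV inc_g) | rewrite inc_g].
split; [move=> l Pl; split | split].
- case/(L1_or_L2_through_point gq_axiom inc_g PPg Pl) => ?.
    by left; apply: line_l1.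
  by right; apply: line_l2.
- case=> ->.
    by apply: (L1_or_L2_of_common_point (Q := P)); rewrite ?l1g.
  by apply: (L1_or_L2_of_common_point (Q := toP P g)); rewrite ?inc_g.
- case=> n /and3P[Pn Pgn Pgin].
  have e1 := line_l1 n Pn Pgin; have e2 := line_l2 n Pn Pgn.
  by split; rewrite /L1 ?l1g -e1 -e2.
- move=> not_collinear.
  have l12 : l1 != l2.
    by apply/eqP => E; apply: not_collinear; exists l1; rewrite Pl1 Pgil1 E Pgl2.
  split=> //.
    by apply: (L2_of_common_point (Q := P)); rewrite ?l1g // eq_sym.
  apply: (L2_of_common_point (Q := toP P g)); rewrite ?inc_g //.
  by apply: contra_neq l12 => fixed; apply: (act_inj toL g); rewrite l1g fixed.
Qed.
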